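(* Let $d>1$ be a non-integer rational number and $\mu\ge\lceil d\rceil-1$ an integer. Then for every relation $R\in\{\le,<,\ge,>,=,\neq\}$, the discounted-sum comparator with discount factor $d$ for $R$ over the alphabet $\{0,\dots,\mu\}\times\{0,\dots,\mu\}$ — i.e. the set of pairs $(A,B)$ of sequences in $\{0,\dots,\mu\}^\omega$ with $\mathrm{DS}(A,d)\,R\,\mathrm{DS}(B,d)$ — is not $\omega$-regular (not accepted by any B\''uchi automaton reading $A$ and $B$ synchronously).
   Context: $\mathrm{DS}(A,d)=\sum_{i\ge0}A[i]/d^i$ for an infinite sequence $A$ and $d>1$. *)

From Stdlib Require Import Reals List.
Open Scope R_scope.

Definition DS_is (A : nat -> nat) (d : R) (s : R) : Prop :=
  infinite_sum (fun i => INR (A i) / d ^ i) s.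

Inductive cmp_rel := Rle_c | Rlt_c | Rge_c | Rgt_c | Req_c | Rneq_c.

Definition interp (R0 : cmp_rel) (x y : R) : Prop :=
  match R0 with
  | Rle_c => x <= y
  | Rlt_c => x < y
  | Rge_c => x >= y
  | Rgt_c => x > y
  | Req_c => x = y
  | Rneq_c => x <> y
  end.

Record Buchi (Sigma : Type) := {
  state : Type;
  state_finite : exists l : list state, forall q, In q l;
  init : state -> Prop;
  delta : state -> Sigma -> state -> Prop;
  acc : state -> Prop
}.
Arguments state {Sigma}.
Arguments init {Sigma}.
Arguments delta {Sigma}.
Arguments acc {Sigma}.

Definition buchi_accepts {Sigma : Type} (M : Buchi Sigma) (w : nat -> Sigma) : Prop :=
  exists r : nat -> state M,
    init M (r 0%nat) /\
    (forall i, delta M (r i) (w i) (r (S i))) /\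
    (forall n, exists m, (n <= m)%nat /\ acc M (r m)).

Definition in_alphabet (mu : nat) (w : nat -> nat * nat) : Prop :=
  forall i, (fst (w i) <= mu)%nat /\ (snd (w i) <= mu)%nat.

Definition DS_comparator (mu : nat) (d : R) (R0 : cmp_rel) (w : nat -> nat * nat) : Prop :=
  in_alphabet mu w /\
  exists a b, DS_is (fun i => fst (w i)) d a /\ DS_is (fun i => snd (w i)) d b /\ interp R0 a b.

Definition omega_regular (mu : nat) (L : (nat -> nat * nat) -> Prop) : Prop :=
  exists M : Buchi (nat * nat),
    forall w, in_alphabet mu w -> (buchi_accepts M w <-> L w).

From Pilot Require Import Defs.
From Stdlib Require Import Reals ZArith List Lia Lra FinFun Classical ClassicalEpsilon.
From Coquelicot Require Import Coquelicot.
Open Scope R_scope.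

(* A Buchi automaton cannot remember an unbounded amount of information about a
   prefix: whether a prefix [u] followed by a suffix [v] is accepted depends only on
   the set of states reachable after [u].  Hence among the prefixes of one fixed word
   [w] there are two, of lengths [n <> n'], that no suffix of [w] tells apart.

   Take [w = (1,0) (0,b_0) (0,b_1) ...] where the [b_k] are the greedy digits of the
   base-[d] expansion of [1]: with [e_0 = d] and [e_(k+1) = d * frac e_k], put
   [b_k = floor e_k <= mu].  After reading [n] letters the scaled gap
   [g_n = d^n (DS(prefix A) - DS(prefix B))] stays in [[0, d]] (with [g_0 = 0],
   [g_(k+1) = e_k]), and gluing the prefix of length [n] to the suffix of [w] from
   position [m] gives a word whose two components differ in discounted sum by
   [(g_n - g_m) / d^n].  Writing [d = p/q] in lowest terms with [q >= 2],
   [e_k q^(k+1)] is an integer not divisible by [q], so the gaps are pairwise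
   distinct, and then each of the six relations separates the two prefixes. *)

(** * Pigeonhole for families of predicates on a finite type *)

Fixpoint bool_lists (k : nat) : list (list bool) :=
  match k with
  | O => nil :: nil
  | S k => map (cons true) (bool_lists k) ++ map (cons false) (bool_lists k)
  end.

Lemma length_bool_lists k : length (bool_lists k) = (2 ^ k)%nat.
Proof. induction k; simpl; auto. rewrite length_app, !length_map. lia. Qed.

Lemma in_bool_lists k (x : list bool) : length x = k -> In x (bool_lists k).
Proof.
  revert x; induction k as [|k IH]; intros [|b x] Hx; try discriminate.
  - now left.
  - simpl in Hx |- *. apply in_or_app.
    destruct b; [left|right]; apply in_map, IH; lia.
Qed.

Lemma bool_lists_not_injective k (f : nat -> list bool) :
  (forall n, length (f n) = k) -> ~ Injective f.
Proof.
  intros Hlen Hinj.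
  assert (H := NoDup_incl_length (Injective_map_NoDup Hinj (seq_NoDup (S (2 ^ k)) 0))
                 (l' := bool_lists k)).
  rewrite length_map, length_seq, length_bool_lists in H.
  apply (Nat.lt_irrefl (2 ^ k)), H.
  intros x Hx. apply in_map_iff in Hx as [n [<- _]]. now apply in_bool_lists.
Qed.

Definition bool_of_prop (P : Prop) : bool :=
  if excluded_middle_informative P then true else false.

Lemma bool_of_prop_inj (P Q : Prop) : bool_of_prop P = bool_of_prop Q -> (P <-> Q).
Proof.
  unfold bool_of_prop.
  destruct (excluded_middle_informative P), (excluded_middle_informative Q);
    easy.
Qed.

Lemma pred_family_collision {S : Type} (l : list S) (P : nat -> S -> Prop) :
  (forall x, In x l) -> exists n n', n <> n' /\ forall x, P n x <-> P n' x.
Proof.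
  intros Hl. apply NNPP. intros Hno.
  apply (bool_lists_not_injective (length l) (fun n => map (fun x => bool_of_prop (P n x)) l)).
  - intros n. apply length_map.
  - intros n n' Hcode. apply NNPP. intros Hne. apply Hno. exists n, n'.
    split; [exact Hne|]. intros x.
    exact (bool_of_prop_inj _ _ (proj1 map_ext_in_iff Hcode x (Hl x))).
Qed.

(** * Splicing a word inside a Buchi automaton *)

Section BuchiSplice.
Variables (Sigma : Type) (M : Buchi Sigma) (w : nat -> Sigma).

Definition splice (n m : nat) : nat -> Sigma :=
  fun i => if Nat.ltb i n then w i else w (i - n + m)%nat.

Definition reachable (n : nat) (q : state M) : Prop :=
  exists r : nat -> state M, init M (r 0%nat) /\
    (forall i, (i < n)%nat -> delta M (r i) (w i) (r (S i))) /\ r n = q.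

Definition accepts_from (q : state M) (m : nat) : Prop :=
  exists r : nat -> state M, r 0%nat = q /\
    (forall i, delta M (r i) (w (i + m)%nat) (r (S i))) /\
    (forall N, exists k, (N <= k)%nat /\ acc M (r k)).

Lemma buchi_accepts_splice n m :
  buchi_accepts M (splice n m) <-> exists q, reachable n q /\ accepts_from q m.
Proof.
  unfold splice. split.
  - intros [r [Hinit [Hrun Hacc]]]. exists (r n). split.
    + exists r. split; [exact Hinit|]. split; [|reflexivity].
      intros i Hi. specialize (Hrun i). now destruct (Nat.ltb_spec i n); [|lia].
    + exists (fun i => r (i + n)%nat). repeat split.
      * intros i. specialize (Hrun (i + n)%nat).
        destruct (Nat.ltb_spec (i + n) n); [lia|].
        now replace (i + n - n + m)%nat with (i + m)%nat in Hrun by lia.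
      * intros N. destruct (Hacc (N + n)%nat) as [k [Hk Hak]].
        exists (k - n)%nat. split; [lia|]. now replace (k - n + n)%nat with k by lia.
  - intros [q [[r1 [Hinit [Hrun1 Hend]]] [r2 [Hstart [Hrun2 Hacc]]]]].
    exists (fun i => if Nat.ltb i n then r1 i else r2 (i - n)%nat). repeat split.
    + destruct (Nat.ltb_spec 0 n); [exact Hinit|].
      replace n with 0%nat in Hend by lia. simpl. now rewrite Hstart, <- Hend.
    + intros i. destruct (Nat.ltb_spec i n), (Nat.ltb_spec (S i) n); try lia.
      * now apply Hrun1.
      * replace (S i - n)%nat with 0%nat by lia. replace n with (S i) in Hend by lia.
        rewrite Hstart, <- Hend. now apply Hrun1.
      * replace (S i - n)%nat with (S (i - n)) by lia. apply Hrun2.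
    + intros N. destruct (Hacc N) as [k [Hk Hak]]. exists (k + n)%nat. split; [lia|].
      destruct (Nat.ltb_spec (k + n) n); [lia|]. now replace (k + n - n)%nat with k by lia.
Qed.

Lemma buchi_splice_collision :
  exists n n', n <> n' /\
    forall m, buchi_accepts M (splice n m) <-> buchi_accepts M (splice n' m).
Proof.
  destruct (state_finite _ M) as [l Hl].
  destruct (pred_family_collision l reachable Hl) as [n [n' [Hne Hsame]]].
  exists n, n'. split; [exact Hne|]. intros m.
  rewrite !buchi_accepts_splice.
  split; intros [q [Hq Hacc]]; exists q; split; auto; apply Hsame; exact Hq.
Qed.

End BuchiSplice.

Arguments splice {Sigma} w n m i.

Lemma in_alphabet_splice mu w n m : in_alphabet mu w -> in_alphabet mu (splice w n m).
Proof. intros Hw i. unfold splice. destruct (i <? n)%nat; apply Hw. Qed.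

(** * Discounted sums *)

Fixpoint partial_sum (f : nat -> R) (K : nat) : R :=
  match K with O => 0 | S K => partial_sum f K + f K end.

Lemma sum_f_R0_partial_sum f n : sum_f_R0 f n = partial_sum f (S n).
Proof. induction n as [|n IH]; simpl; [lra|]. now rewrite IH. Qed.

Lemma infinite_sum_geometric_error (d : R) (f : nat -> R) (L C : R) (K0 : nat) :
  1 < d -> 0 < C ->
  (forall K, (K0 <= K)%nat -> Rabs (partial_sum f K - L) <= C / d ^ K) ->
  infinite_sum f L.
Proof.
  intros Hd HC Herr eps Heps.
  destruct (Pow_x_infinity d ltac:(rewrite Rabs_pos_eq; lra) (C / eps + 1)) as [N HN].
  exists (Nat.max N K0). intros n Hn. unfold R_dist. rewrite sum_f_R0_partial_sum.
  assert (Hpow : 0 < d ^ S n) by (apply pow_lt; lra).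
  specialize (HN (S n) ltac:(lia)). rewrite Rabs_pos_eq in HN by lra.
  eapply Rle_lt_trans; [apply Herr; lia|].
  apply Rmult_lt_reg_r with (d ^ S n); [exact Hpow|].
  apply Rmult_lt_reg_r with (/ eps); [now apply Rinv_0_lt_compat|].
  replace (C / d ^ S n * d ^ S n * / eps) with (C / eps) by (field; lra).
  replace (eps * d ^ S n * / eps) with (d ^ S n) by (field; lra). lra.
Qed.

Lemma DS_exists (d : R) (mu : nat) (A : nat -> nat) :
  1 < d -> (forall i, (A i <= mu)%nat) -> exists s, DS_is A d s.
Proof.
  intros Hd HA.
  assert (Hinv : forall i, 0 < / d ^ i) by (intros; apply Rinv_0_lt_compat, pow_lt; lra).
  assert (Hex : ex_series (fun i => INR (A i) / d ^ i)).
  { apply (ex_series_le (V := R_CompleteNormedModule)) with (b := fun i => INR mu * (/ d) ^ i).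
    - intros i. simpl. rewrite pow_inv, Rabs_pos_eq.
      + apply Rmult_le_compat_r; [apply Rlt_le, Hinv| apply le_INR, HA].
      + apply Rmult_le_pos; [apply pos_INR| apply Rlt_le, Hinv].
    - apply (ex_series_scal (V := R_NormedModule)), ex_series_geom.
      rewrite Rabs_pos_eq; [|apply Rlt_le, Rinv_0_lt_compat; lra].
      rewrite <- Rinv_1. apply Rinv_1_lt_contravar; lra. }
  destruct Hex as [s Hs]. exists s. now apply is_series_Reals.
Qed.

Lemma interp_separates (R0 : cmp_rel) (x y : R) : x <> y ->
  ~ (Defs.interp R0 x x <-> Defs.interp R0 y x) \/ ~ (Defs.interp R0 x y <-> Defs.interp R0 y y).
Proof.
  intros Hxy.
  destruct (Rlt_or_le x y); destruct R0; simpl;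
    first [ left; intros [Himp _]; specialize (Himp ltac:(lra)); lra
          | left; intros [_ Himp]; specialize (Himp ltac:(lra)); lra
          | right; intros [Himp _]; specialize (Himp ltac:(lra)); lra
          | right; intros [_ Himp]; specialize (Himp ltac:(lra)); lra ].
Qed.

(** * The greedy word of a rational discount factor *)

Section GreedyWord.
Variables (d : R) (p q : Z) (mu : nat).
Hypothesis d_pq : d = IZR p / IZR q.
Hypothesis q_ge2 : (2 <= q)%Z.
Hypothesis pq_coprime : Z.gcd p q = 1%Z.
Hypothesis d_gt1 : 1 < d.
Hypothesis le_d_le_mu : forall z, IZR z <= d -> (z <= Z.of_nat mu)%Z.

Fixpoint greedy_rem (k : nat) : R :=
  match k with
  | O => d
  | S k => d * (greedy_rem k - IZR (Int_part (greedy_rem k)))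
  end.

Definition gap (n : nat) : R := match n with O => 0 | S k => greedy_rem k end.

Definition greedy_word (i : nat) : nat * nat :=
  match i with
  | O => (1%nat, 0%nat)
  | S k => (0%nat, Z.to_nat (Int_part (greedy_rem k)))
  end.

Definition letter_diff (w : nat -> nat * nat) (i : nat) : R :=
  INR (fst (w i)) - INR (snd (w i)).

Lemma greedy_rem_bounds k : 0 <= greedy_rem k <= d.
Proof.
  induction k as [|k IH]; simpl; [lra|].
  destruct (base_Int_part (greedy_rem k)). split; nra.
Qed.

Lemma greedy_digit_bounds k :
  (0 <= Int_part (greedy_rem k))%Z /\ (Int_part (greedy_rem k) <= Z.of_nat mu)%Z.
Proof.
  destruct (base_Int_part (greedy_rem k)), (greedy_rem_bounds k). split.
  - apply Z.lt_succ_r, lt_IZR. rewrite succ_IZR. lra.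
  - apply le_d_le_mu. lra.
Qed.

Lemma greedy_word_in_alphabet : in_alphabet mu greedy_word.
Proof.
  assert (Hmu : (1 <= Z.of_nat mu)%Z) by (apply le_d_le_mu; lra).
  intros [|k]; simpl; split; try lia.
  destruct (greedy_digit_bounds k). lia.
Qed.

Lemma gap_bounds n : 0 <= gap n <= d.
Proof. destruct n; simpl; [lra|apply greedy_rem_bounds]. Qed.

Lemma gap_S k : gap (S k) = d * (gap k + letter_diff greedy_word k).
Proof.
  unfold letter_diff. destruct k; simpl; [lra|].
  rewrite INR_IZR_INZ, Z2Nat.id by apply greedy_digit_bounds. lra.
Qed.

(* Multiplying by [d] multiplies the numerator by [p], coprime to [q], and the
   denominator by [q]. *)
Lemma greedy_rem_numerator k :
  exists a, greedy_rem k * IZR q ^ S k = IZR a /\ ~ (q | a)%Z.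
Proof.
  assert (Hq0 : IZR q <> 0) by (apply not_0_IZR; lia).
  induction k as [|k [a [Ha Hndiv]]].
  - exists p. split; [simpl; rewrite d_pq; field; exact Hq0|].
    intros Hdiv. assert (Hq1 : (q | 1)%Z).
    { rewrite <- pq_coprime. apply Z.gcd_greatest; [exact Hdiv| apply Z.divide_refl]. }
    apply Z.divide_1_r_nonneg in Hq1; lia.
  - set (t := (Int_part (greedy_rem k) * q ^ Z.of_nat (S k))%Z).
    assert (Hqt : (q | t)%Z).
    { apply Z.divide_mul_r. rewrite Nat2Z.inj_succ, Z.pow_succ_r by lia.
      apply Z.divide_mul_l, Z.divide_refl. }
    exists (p * (a - t))%Z. split.
    + unfold t. cbn [greedy_rem].
      rewrite mult_IZR, minus_IZR, mult_IZR, <- pow_IZR, <- Ha, d_pq. simpl. field. exact Hq0.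
    + intros Hdiv. apply Z.gauss in Hdiv; [|now rewrite Z.gcd_comm].
      apply Hndiv. replace a with (a - t + t)%Z by ring. now apply Z.divide_add_r.
Qed.

Lemma greedy_rem_neq0 k : greedy_rem k <> 0.
Proof.
  intros H0. destruct (greedy_rem_numerator k) as [a [Ha Hndiv]].
  rewrite H0, Rmult_0_l in Ha. apply eq_IZR in Ha. subst a. apply Hndiv, Z.divide_0_r.
Qed.

Lemma greedy_rem_neq i j : (i < j)%nat -> greedy_rem i <> greedy_rem j.
Proof.
  intros Hij Heq.
  destruct (greedy_rem_numerator i) as [ai [Hai _]].
  destruct (greedy_rem_numerator j) as [aj [Haj Hndiv]].
  assert (Hj : aj = (ai * q ^ Z.of_nat (j - i))%Z).
  { apply eq_IZR. rewrite mult_IZR, <- pow_IZR, <- Haj, <- Hai, Heq, Rmult_assoc, <- pow_add.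
    do 2 f_equal. lia. }
  apply Hndiv. rewrite Hj. apply Z.divide_mul_r.
  replace (Z.of_nat (j - i)) with (Z.succ (Z.of_nat (j - i - 1))) by lia.
  rewrite Z.pow_succ_r by lia. apply Z.divide_mul_l, Z.divide_refl.
Qed.

Lemma gap_inj i j : i <> j -> gap i <> gap j.
Proof.
  intros Hne. destruct i as [|i], j as [|j]; simpl.
  - congruence.
  - intros H. now apply (greedy_rem_neq0 j).
  - apply greedy_rem_neq0.
  - destruct (Nat.lt_total i j) as [H|[H|H]].
    + now apply greedy_rem_neq.
    + congruence.
    + intros H'. now apply (greedy_rem_neq j i).
Qed.

Lemma scaled_partial_sum_greedy K :
  partial_sum (fun i => letter_diff greedy_word i / d ^ i) K * d ^ K = gap K.
Proof.
  induction K as [|K IH]; cbn [partial_sum pow]; [simpl; lra|].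
  rewrite gap_S, <- IH. field. apply pow_nonzero. lra.
Qed.

Lemma partial_sum_splice_prefix n m K : (K <= n)%nat ->
  partial_sum (fun i => letter_diff (splice greedy_word n m) i / d ^ i) K
  = partial_sum (fun i => letter_diff greedy_word i / d ^ i) K.
Proof.
  induction K as [|K IH]; simpl; intros HK; [reflexivity|].
  rewrite IH by lia. unfold splice, letter_diff.
  now destruct (Nat.ltb_spec K n); [|lia].
Qed.

Lemma scaled_partial_sum_splice n m j :
  partial_sum (fun i => letter_diff (splice greedy_word n m) i / d ^ i) (n + j) * d ^ (n + j)
  = (gap n - gap m) * d ^ j + gap (m + j).
Proof.
  induction j as [|j IH].
  - rewrite !Nat.add_0_r, partial_sum_splice_prefix, scaled_partial_sum_greedy by lia.
    simpl. ring.
  - rewrite !Nat.add_succ_r. cbn [partial_sum pow]. rewrite gap_S.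
    replace ((gap n - gap m) * (d * d ^ j)) with
      (d * (partial_sum (fun i => letter_diff (splice greedy_word n m) i / d ^ i) (n + j)
            * d ^ (n + j) - gap (m + j))) by (rewrite IH; ring).
    assert (Hletter : letter_diff (splice greedy_word n m) (n + j)
                      = letter_diff greedy_word (m + j)).
    { unfold splice, letter_diff. destruct (Nat.ltb_spec (n + j) n); [lia|].
      now replace (n + j - n + m)%nat with (m + j)%nat by lia. }
    rewrite Hletter. field. apply pow_nonzero. lra.
Qed.

Lemma DS_splice_diff n m a b :
  DS_is (fun i => fst (splice greedy_word n m i)) d a ->
  DS_is (fun i => snd (splice greedy_word n m i)) d b ->
  a - b = (gap n - gap m) / d ^ n.
Proof.
  intros Ha Hb. unfold DS_is in Ha, Hb. apply is_series_Reals in Ha, Hb.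
  assert (Hpow : forall k, 0 < d ^ k) by (intros; apply pow_lt; lra).
  assert (Hlim : infinite_sum (fun i => letter_diff (splice greedy_word n m) i / d ^ i)
                              ((gap n - gap m) / d ^ n)).
  { apply (infinite_sum_geometric_error d _ _ d n); try lra.
    intros K HK. replace K with (n + (K - n))%nat by lia.
    set (j := (K - n)%nat).
    replace (_ - _) with (gap (m + j) / d ^ (n + j)).
    2:{ apply Rmult_eq_reg_r with (d ^ (n + j)); [|apply Rgt_not_eq, Hpow].
        rewrite Rmult_minus_distr_r, scaled_partial_sum_splice, pow_add.
        field. split; apply Rgt_not_eq, Hpow. }
    destruct (gap_bounds (m + j)).
    rewrite Rabs_pos_eq by (apply Rdiv_le_0_compat; [lra| apply Hpow]).
    apply Rmult_le_compat_r; [apply Rlt_le, Rinv_0_lt_compat, Hpow| lra]. }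
  apply is_series_Reals, is_series_unique in Hlim. rewrite <- Hlim.
  symmetry. apply is_series_unique.
  eapply is_series_ext; [|exact (is_series_minus _ _ _ _ Ha Hb)].
  intros i. unfold letter_diff, minus, plus, opp; simpl. field. apply pow_nonzero. lra.
Qed.

Lemma comparator_splice_iff R0 n m :
  DS_comparator mu d R0 (splice greedy_word n m) <-> Defs.interp R0 (gap n) (gap m).
Proof.
  pose proof (in_alphabet_splice mu _ n m greedy_word_in_alphabet) as Halpha.
  assert (Hscale : forall a b,
            DS_is (fun i => fst (splice greedy_word n m i)) d a ->
            DS_is (fun i => snd (splice greedy_word n m i)) d b ->
            (Defs.interp R0 a b <-> Defs.interp R0 (gap n) (gap m))).
  { intros a b Ha Hb.
    assert (Hpow : 0 < d ^ n) by (apply pow_lt; lra).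
    assert (Hdiff : gap n - gap m = (a - b) * d ^ n)
      by (rewrite (DS_splice_diff n m a b Ha Hb); field; lra).
    destruct R0; simpl; split; intros; nra. }
  split.
  - intros [_ [a [b [Ha [Hb Hab]]]]]. now apply (Hscale a b).
  - intros Hgap. split; [exact Halpha|].
    destruct (DS_exists d mu _ d_gt1 (fun i => proj1 (Halpha i))) as [a Ha].
    destruct (DS_exists d mu _ d_gt1 (fun i => proj2 (Halpha i))) as [b Hb].
    exists a, b. repeat split; [exact Ha| exact Hb|]. now apply (Hscale a b).
Qed.

End GreedyWord.

Lemma rational_lowest_terms (d : R) :
  (exists p q : Z, (0 < q)%Z /\ d = IZR p / IZR q) ->
  exists p q : Z, (0 < q)%Z /\ Z.gcd p q = 1%Z /\ d = IZR p / IZR q.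
Proof.
  intros [p [q [Hq Hd]]].
  set (g := Z.gcd p q).
  assert (Hg : (0 < g)%Z).
  { destruct (Z.eq_dec g 0) as [H|H]; [|pose proof (Z.gcd_nonneg p q); lia].
    apply Z.gcd_eq_0 in H. lia. }
  destruct (Z.gcd_divide_l p q) as [p' Hp'], (Z.gcd_divide_r p q) as [q' Hq'].
  fold g in Hp', Hq'.
  exists p', q'. repeat split.
  - nia.
  - pose proof (Z.gcd_div_gcd p q g ltac:(lia) eq_refl) as H.
    replace (p / g)%Z with p' in H by (rewrite Hp'; symmetry; apply Z.div_mul; lia).
    replace (q / g)%Z with q' in H by (rewrite Hq'; symmetry; apply Z.div_mul; lia).
    exact H.
  - rewrite Hd, Hp', Hq', !mult_IZR. field. split; apply not_0_IZR; lia.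
Qed.

Lemma le_discount_le_mu (d : R) (mu : nat) :
  (forall z : Z, d <> IZR z) ->
  (forall c : Z, IZR c - 1 < d <= IZR c -> (c - 1 <= Z.of_nat mu)%Z) ->
  forall z : Z, IZR z <= d -> (z <= Z.of_nat mu)%Z.
Proof.
  intros Hnonint Hmu z Hz. destruct (archimed d) as [Hup1 Hup2].
  assert (Hzup : (z < up d)%Z) by (apply lt_IZR; lra).
  assert (Hc : IZR (up d) - 1 <> d).
  { rewrite <- minus_IZR. intros E. now apply (Hnonint (up d - 1)%Z). }
  pose proof (Hmu (up d) ltac:(lra)). lia.
Qed.

Theorem theorem7 (d : R) (mu : nat)
  (Hd1 : 1 < d)
  (Hrat : exists p q : Z, (0 < q)%Z /\ d = IZR p / IZR q)
  (Hnonint : forall z : Z, d <> IZR z)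
  (Hmu : forall c : Z, IZR c - 1 < d <= IZR c -> (c - 1 <= Z.of_nat mu)%Z) :
  forall R0 : cmp_rel, ~ omega_regular mu (DS_comparator mu d R0).
Proof.
  intros R0 [M HM].
  destruct (rational_lowest_terms d Hrat) as [p [q [Hq [Hpq Hd]]]].
  assert (Hq2 : (2 <= q)%Z).
  { destruct (Z.eq_dec q 1) as [->|]; [|lia].
    exfalso. apply (Hnonint p). rewrite Hd. field. }
  pose proof (le_discount_le_mu d mu Hnonint Hmu) as Hz.
  assert (Hlang : forall n m, buchi_accepts M (splice (greedy_word d) n m)
                              <-> Defs.interp R0 (gap d n) (gap d m)).
  { intros n m. rewrite HM.
    - exact (comparator_splice_iff d mu Hd1 Hz R0 n m).
    - exact (in_alphabet_splice mu _ n m (greedy_word_in_alphabet d mu Hd1 Hz)). }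
  destruct (buchi_splice_collision _ M (greedy_word d)) as [n [n' [Hne Hsame]]].
  destruct (interp_separates R0 _ _ (gap_inj d p q Hd Hq2 Hpq n n' Hne)) as [Hsep|Hsep];
    apply Hsep; rewrite <- !Hlang; apply Hsame.
Qed.
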